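(* Let $(X,\pi)$ be a finite symmetric two-player game with relative payoff game $(X,\Delta)$. If $\Delta$ is quasiconcave, then imitation is not subject to a money pump.
   Context: $\pi(x,y)$ is the payoff of the player choosing $x$ against $y$; $\Delta(x,y)=\pi(x,y)-\pi(y,x)$. $\Delta$ is quasiconcave (single-peaked) if there is a total order $\le$ on $X$ such that for each $y\in X$ the function $x\mapsto\Delta(x,y)$ is weakly increasing up to some $k_y\in X$ and weakly decreasing from $k_y$ on. Imitate-the-best: given initial $y_0\in X$ and any opponent sequence $(x_t)_{t\ge0}$, $y_t=x_{t-1}$ if $\Delta(x_{t-1},y_{t-1})>0$ and $y_t=y_{t-1}$ otherwise. Imitation is not subject to a money pump if there is $M\in\mathbb{R}_+$ such that for every $y_0\in X$ and every sequence $(x_t)$, $\limsup_{T\to\infty}\sum_{t=0}^T\Delta(x_t,y_t)\le M$. *)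

From HB Require Import structures.
From mathcomp Require Import all_boot all_order all_algebra.
From mathcomp Require Import all_classical all_reals all_analysis.
Set Implicit Arguments. Unset Strict Implicit. Unset Printing Implicit Defensive.
Import Order.TTheory GRing.Theory Num.Theory.
Local Open Scope ring_scope.

Definition relpay {R : realType} {X : Type} (pi : X -> X -> R) (x y : X) : R :=
  pi x y - pi y x.

Definition total_order {X : Type} (le : X -> X -> Prop) : Prop :=
  (forall x, le x x) /\
  (forall x y, le x y -> le y x -> x = y) /\
  (forall x y z, le x y -> le y z -> le x z) /\
  (forall x y, le x y \/ le y x).

(* Delta is quasiconcave (single-peaked): there is a total order on X such that
   for every y, x |-> Delta(x,y) is weakly increasing up to some k_y and weakly
   decreasing from k_y on. *)
Definition quasiconcave {R : realType} {X : Type} (D : X -> X -> R) : Prop :=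
  exists le : X -> X -> Prop, total_order le /\
    forall y, exists k : X,
      (forall x1 x2, le x1 x2 -> le x2 k -> D x1 y <= D x2 y) /\
      (forall x1 x2, le k x1 -> le x1 x2 -> D x2 y <= D x1 y).

Fixpoint imitate {R : realType} {X : Type} (D : X -> X -> R) (y0 : X)
  (x : nat -> X) (t : nat) : X :=
  match t with
  | 0 => y0
  | t'.+1 => let yp := imitate D y0 x t' in
             if 0 < D (x t') yp then x t' else yp
  end.

Definition cum_relpay {R : realType} {X : Type} (D : X -> X -> R) (y0 : X)
  (x : nat -> X) (T : nat) : \bar R :=
  ((\sum_(0 <= t < T.+1) D (x t) (imitate D y0 x t))%R)%:E.

Definition no_money_pump {R : realType} {X : Type} (D : X -> X -> R) : Prop :=
  exists M : R, 0 <= M /\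
    forall (y0 : X) (x : nat -> X),
      (limn_esup (cum_relpay D y0 x) <= M%:E)%E.

From HB Require Import structures.
From mathcomp Require Import all_boot all_order all_algebra.
From mathcomp Require Import all_classical all_reals all_analysis.
Set Implicit Arguments. Unset Strict Implicit. Unset Printing Implicit Defensive.
Import Order.TTheory GRing.Theory Num.Theory.
Local Open Scope ring_scope.

(** Say that [a] beats [b] when [0 < Delta(a, b)]. Single-peakedness and the
    skew-symmetry of [Delta] make this relation acyclic on every finite set:
    in any nonempty set, the least or the greatest element (for the order
    witnessing single-peakedness) beats no element of the set. Peeling off such
    elements one at a time yields a rank [phi : X -> nat] that strictly
    increases along "beats". Imitate-the-best only ever switches to a strategy
    that beats the current one, so the rank of the imitator's strategy bounds
    the number of switches; every switch earns at most [max Delta], and every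
    other period earns [Delta <= 0]. Hence all partial sums are bounded by
    [max Delta * max phi]. *)

Lemma total_order_flip (T : Type) (le : T -> T -> Prop) :
  total_order le -> total_order (fun x y => le y x).
Proof.
move=> [refl [anti [trans tot]]].
split; [exact: refl | split; [by move=> x y yx xy; exact: anti | split]].
- by move=> x y z yx zy; exact: trans zy yx.
- by move=> x y; case: (tot x y); auto.
Qed.

Lemma total_order_least (T : eqType) (le : T -> T -> Prop) (s : seq T) :
  total_order le -> s != [::] -> exists2 l, l \in s & forall x, x \in s -> le l x.
Proof.
move=> [refl [_ [trans tot]]]; elim: s => // y [|z s] IH _.
  by exists y => [|x]; rewrite ?mem_head // mem_seq1 => /eqP ->; apply: refl.
have [l ls lP] := IH isT.
case: (tot y l) => [yl | ly].
- exists y; first exact: mem_head.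
  by move=> x; rewrite inE => /orP[/eqP -> // | /lP]; apply: trans.
- exists l; first by rewrite inE ls orbT.
  by move=> x; rewrite inE => /orP[/eqP -> // | /lP].
Qed.

Section SinglePeaked.
Variables (R : realType) (X : finType) (D : X -> X -> R) (le : X -> X -> Prop).
Hypothesis D_skew : forall x y, D x y = - D y x.
Hypothesis le_total : total_order le.
Hypothesis D_single_peaked : forall y, exists k : X,
  (forall x1 x2, le x1 x2 -> le x2 k -> D x1 y <= D x2 y) /\
  (forall x1 x2, le k x1 -> le x1 x2 -> D x2 y <= D x1 y).

Lemma skew_diag x : D x x = 0.
Proof.
by have /eqP := D_skew x x; rewrite -addr_eq0 -mulr2n mulrn_eq0 => /eqP.
Qed.

Lemma single_peaked_mid x1 x2 x3 y : le x1 x2 -> le x2 x3 ->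
  Num.min (D x1 y) (D x3 y) <= D x2 y.
Proof.
move=> le12 le23; have [k [incr decr]] := D_single_peaked y.
case: le_total => _ [_ [_ tot]].
by rewrite ge_min; case: (tot x2 k) => [x2k | kx2];
  [rewrite (incr _ _ le12 x2k) | rewrite (decr _ _ kx2 le23) orbT].
Qed.

Lemma single_peaked_mid_gt0 x1 x2 x3 y : le x1 x2 -> le x2 x3 ->
  0 < D x1 y -> 0 < D x3 y -> 0 < D x2 y.
Proof.
move=> le12 le23 D1 D3.
by apply: lt_le_trans (single_peaked_mid y le12 le23); rewrite lt_min D1 D3.
Qed.

Lemma single_peaked_mid_ge0 x1 x2 x3 y : le x1 x2 -> le x2 x3 ->
  0 <= D x1 y -> 0 <= D x3 y -> 0 <= D x2 y.
Proof.
move=> le12 le23 D1 D3.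
by apply: le_trans (single_peaked_mid y le12 le23); rewrite le_min D1 D3.
Qed.

Lemma not_both_ends_beat l h a b : le l a -> le a h -> le l b -> le b h ->
  0 < D l a -> 0 < D h b -> False.
Proof.
move=> la ah lb bh Dla Dhb.
have [_ [_ [_ tot]]] := le_total.
have Dah : 0 <= D a h.
  rewrite D_skew oppr_ge0 leNgt; apply/negP => Dha.
  by have := single_peaked_mid_gt0 la ah Dla Dha; rewrite skew_diag ltxx.
have Dbl : 0 <= D b l.
  rewrite D_skew oppr_ge0 leNgt; apply/negP => Dlb.
  by have := single_peaked_mid_gt0 lb bh Dlb Dhb; rewrite skew_diag ltxx.
have Dbh : D b h < 0 by rewrite D_skew oppr_lt0.
have Dal : D a l < 0 by rewrite D_skew oppr_lt0.
case: (tot a b) => [ab | ba].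
  have Dhh : 0 <= D h h by rewrite skew_diag.
  by have := single_peaked_mid_ge0 ab bh Dah Dhh; rewrite leNgt Dbh.
have Dlh : D l h < 0.
  rewrite ltNge; apply/negP => Dlh.
  by have := single_peaked_mid_ge0 lb ba Dlh Dah; rewrite leNgt Dbh.
have Dhl : D h l < 0.
  rewrite ltNge; apply/negP => Dhl.
  by have := single_peaked_mid_ge0 ba ah Dbl Dhl; rewrite leNgt Dal.
by move: Dhl; rewrite D_skew oppr_lt0 ltNge ltW.
Qed.

Lemma exists_unbeating (S : {set X}) : (0 < #|S|)%N ->
  exists2 e, e \in S & forall b, b \in S -> D e b <= 0.
Proof.
rewrite cardE => enumS_gt0; have enumS_neq0 : enum S != [::].
  by move: enumS_gt0; case: (enum S).
have [l + lP] := total_order_least le_total enumS_neq0.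
have [h + hP] := total_order_least (total_order_flip le_total) enumS_neq0.
rewrite !mem_enum => lS hS.
have inS x : x \in S -> x \in enum S by rewrite mem_enum.
case: (boolP [forall b in S, D l b <= 0]) => [/forall_inP | /forall_inPn[a aS]].
  by exists l.
rewrite -ltNge => Dla; exists h => // b bS; rewrite leNgt; apply/negP => Dhb.
by apply: (not_both_ends_beat (a := a) (b := b)); auto.
Qed.

Lemma beats_rank (S : {set X}) :
  exists phi : X -> nat, {in S &, forall a b, 0 < D a b -> (phi b < phi a)%N}.
Proof.
move cardS : #|S| => n; elim: n S cardS => [|n IH] S cardS.
  by exists (fun=> 0%N) => a; move/eqP: cardS; rewrite cards_eq0 => /eqP ->; rewrite inE.
have [|e eS eP] := exists_unbeating (S := S); first by rewrite cardS.
have [|phi phiP] := IH (S :\ e); first by move: cardS; rewrite (cardsD1 e) eS => -[].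
exists (fun x => if x == e then 0%N else (phi x).+1) => a b aS bS Dab.
have ae : a != e by apply: contraTneq Dab => ->; rewrite -leNgt eP.
rewrite (negPf ae); case: eqP => // /eqP be; rewrite ltnS.
by apply: phiP; rewrite // !inE ?ae ?be.
Qed.

End SinglePeaked.

Lemma imitate_sum_le (R : realType) (X : Type) (D : X -> X -> R)
    (phi : X -> nat) (C : R) (y0 : X) (x : nat -> X) (n : nat) :
  0 <= C -> (forall a b, D a b <= C) ->
  (forall a b, 0 < D a b -> (phi b < phi a)%N) ->
  \sum_(0 <= t < n) D (x t) (imitate D y0 x t)
    <= C * (phi (imitate D y0 x n))%:R.
Proof.
move=> C_ge0 D_leC phiP; elim: n => [|n IHn]; first by rewrite big_geq // mulr_ge0.
rewrite big_nat_recr //=; case: ifP => [Dpos | /negbT]; last first.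
  by rewrite -leNgt => Dle0; rewrite -[leRHS]addr0 lerD.
apply: le_trans (lerD IHn (D_leC _ _)) _.
by rewrite -[X in _ + X <= _](mulr1 C) -mulrDr ler_wpM2l // natr1 ler_nat phiP.
Qed.

Lemma limn_esup_le_ub (R : realType) (u : (\bar R)^nat) (M : \bar R) :
  (forall n, (u n <= M)%E) -> (limn_esup u <= M)%E.
Proof.
move=> u_leM; rewrite limn_esup_lim.
apply: lime_le; first exact: is_cvg_esups.
by apply: nearW => n; apply: ge_ereal_sup => _ [m _ <-].
Qed.

Theorem proposition5 (R : realType) (X : finType) (pi : X -> X -> R) :
  quasiconcave (relpay pi) -> no_money_pump (relpay pi).
Proof.
move=> [le [le_total D_single_peaked]]; set D := relpay pi.
have D_skew x y : D x y = - D y x by rewrite /D /relpay opprB.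
have [phi phiP] := beats_rank D_skew le_total D_single_peaked [set: X].
set C := \big[Num.max/0]_(p : X * X) D p.1 p.2.
have /bigmax_leP[C_ge0 D_leC] := lexx C.
exists (C * (\max_(z : X) phi z)%:R); split; first by rewrite mulr_ge0.
move=> y0 x; apply: limn_esup_le_ub => T; rewrite /cum_relpay lee_fin.
apply: le_trans (imitate_sum_le y0 x T.+1 C_ge0 _ _) _.
- by move=> a b; exact: (D_leC (a, b)).
- by move=> a b; apply: phiP; rewrite inE.
- by rewrite ler_wpM2l // ler_nat leq_bigmax.
Qed.
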